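(* Fix $0<m<2M$. For $s_1,s_2\in\{+,-\}$ and $\xi_1,\xi_2\in\mathbb{R}^3$ define \[ \mu^{s_1,s_2}(\xi_1,\xi_2):=\langle\xi_1-\xi_2\rangle_m+s_1\langle\xi_1\rangle_M-s_2\langle\xi_2\rangle_M . \] There is a (sufficiently small) absolute constant $c>0$ such that the following hold, with implicit constants depending only on $m,M$ (and $c$). Case 1: If (a) $s_1=+,s_2=-$, or (b) $s_1=-,s_2=+$ and $\langle\xi_1-\xi_2\rangle_m\le c\min(\langle\xi_1\rangle_M,\langle\xi_2\rangle_M)$, then \[ |\mu^{s_1,s_2}(\xi_1,\xi_2)|\gtrsim \max(\langle\xi_1-\xi_2\rangle,\langle\xi_1\rangle,\langle\xi_2\rangle). \] Case 2: If (a) $s_1=s_2$, or (b) $s_1=-,s_2=+$ and $\langle\xi_1-\xi_2\rangle_m> c\min(\langle\xi_1\rangle_M,\langle\xi_2\rangle_M)$, then \[ |\mu^{s_1,s_2}(\xi_1,\xi_2)|\gtrsim \frac{\langle\xi_1\rangle\langle\xi_2\rangle}{\langle\xi_1-\xi_2\rangle}\,\angle(s_1\xi_1,s_2\xi_2)^2 . \] For every choice of signs $s_1,s_2$ one has both \[ |\mu^{s_1,s_2}(\xi_1,\xi_2)|\gtrsim \min(\langle\xi_1\rangle,\langle\xi_2\rangle)\,\angle(s_1\xi_1,s_2\xi_2)^2 \] and \[ |\mu^{s_1,s_2}(\xi_1,\xi_2)|\gtrsim \max(\langle\xi_1-\xi_2\rangle^{-1},\langle\xi_1\rangle^{-1},\langle\xi_2\rangle^{-1}).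 \]
   Context: For $a\ge0$, $\langle\xi\rangle_a:=(a^2+|\xi|^2)^{1/2}$ and $\langle\xi\rangle:=\langle\xi\rangle_1$. For nonzero vectors $x,y\in\mathbb{R}^3$, $\angle(x,y)\in[0,\pi]$ denotes the angle between $x$ and $y$. $A\gtrsim B$ means $A\ge C^{-1}B$ for a constant $C>0$ (here depending only on $m,M$). *)

From mathcomp Require Import all_boot all_order all_algebra.
From mathcomp Require Import all_classical all_reals all_analysis.
Set Implicit Arguments. Unset Strict Implicit. Unset Printing Implicit Defensive.
Import Order.TTheory GRing.Theory Num.Theory.
Local Open Scope ring_scope.

Definition dot3 {R : realType} (x y : 'rV[R]_3) : R :=
  \sum_(i < 3) x ord0 i * y ord0 i.

Definition norm3 {R : realType} (x : 'rV[R]_3) : R := Num.sqrt (dot3 x x).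

(* Japanese bracket <xi>_a := (a^2 + |xi|^2)^(1/2);  <xi> := <xi>_1 *)
Definition jb {R : realType} (a : R) (x : 'rV[R]_3) : R :=
  Num.sqrt (a ^+ 2 + dot3 x x).
Definition jb1 {R : realType} (x : 'rV[R]_3) : R := jb 1 x.

Definition angle3 {R : realType} (x y : 'rV[R]_3) : R :=
  acos (dot3 x y / (norm3 x * norm3 y)).

Definition sgnb {R : realType} (s : bool) : R := if s then 1 else -1.

Definition mu {R : realType} (m M : R) (s1 s2 : bool) (x1 x2 : 'rV[R]_3) : R :=
  jb m (x1 - x2) + sgnb s1 * jb M x1 - sgnb s2 * jb M x2.

From mathcomp Require Import all_boot all_order all_algebra.
From mathcomp Require Import all_classical all_reals all_analysis.
From mathcomp Require Import ring lra.
Import Order.TTheory GRing.Theory Num.Theory numFieldNormedType.Exports.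
Set Implicit Arguments. Unset Strict Implicit. Unset Printing Implicit Defensive.
Local Open Scope ring_scope.

(* Write u = |xi1|, v = |xi2|, a = <xi1>_M, b = <xi2>_M, d = <xi1 - xi2>_m and
   H = a b - M^2 - u v >= 0.  For (s1, s2) = (+, -) the phase d + a + b dominates
   every bracket, and so does a + b - d for (-, +) when d <= min(a, b) / 2.  In the
   remaining cases the phase times a conjugate factor of size O(d) is an explicit
   quantity Z: Z = d^2 - (a - b)^2 = m^2 + 2 (u v - xi1.xi2) + 2 H for equal signs,
   Z = (a + b)^2 - d^2 = 4 M^2 - m^2 + 2 (u v + xi1.xi2) + 2 H for (-, +).  Such a Z
   is bounded below by a positive constant, controls the angle through
   u v - s1 s2 xi1.xi2 = u v (1 - cos theta) and theta^2 <= C (1 - cos theta), and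
   controls the ratio (1 + v) / (1 + u) because H (a b + M^2 + u v) = M^2 (u - v)^2. *)

Section Trigonometry.
Variable R : realType.

Lemma sin_ge_linear : exists k : R, 0 < k <= 1 /\
  forall y, 0 <= y -> y <= pi / 2 -> k * y <= sin y.
Proof.
have c1 : 0 < cos (1 : R) := cos1_gt0 R.
have s1 : 0 < sin (1 : R) by apply: sin2_gt0; rewrite ltr01 /= ltr1n.
have c1le : cos (1 : R) <= 1 := cos_le1 1.
have s1le : sin (1 : R) <= 1 := sin_le1 1.
have pi2 : pi / 2 < (2 : R) := pihalf_lt2 R.
exists (cos 1 * (sin 1 / 2)); split; first by apply/andP; split; nra.
move=> y y0 ypi; have [y1|y1] := lerP y 1.
- (* mean value theorem: sin y = y cos z for some z in [0, y], and cos z >= cos 1 *)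
  have hd x : x \in `]0, y[ -> is_derive x 1 (@sin R) (cos x).
    by move=> _; exact: is_derive_sin.
  have [|z] := @MVT_segment R sin cos 0 y y0 hd.
    exact/continuous_subspaceT/continuous_sin.
  rewrite in_itv /= sin0 !subr0 => /andP[z0 zy] ->.
  have pi2' := pi_ge2 R.
  have zI : z \in `[0, pi] by rewrite in_itv /=; apply/andP; split; lra.
  have oneI : (1 : R) \in `[0, pi] by rewrite in_itv /=; apply/andP; split; lra.
  have : cos 1 <= cos z by rewrite leNgt (ltr_cos oneI zI) -leNgt; lra.
  move=> ?; rewrite ler_wpM2r //; nra.
- have pi2' := pihalf_ge1 R.
  have oneI : (1 : R) \in `[- (pi / 2), pi / 2] by rewrite in_itv /=; apply/andP; split; lra.
  have yI : y \in `[- (pi / 2), pi / 2] by rewrite in_itv /=; apply/andP; split; lra.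
  have : sin 1 <= sin y by rewrite leNgt (ltr_sin yI oneI) -leNgt ltW.
  have : sin 1 / 2 * y <= sin 1 by nra.
  have : cos 1 * (sin 1 / 2 * y) <= sin 1 / 2 * y.
    by rewrite -[X in _ <= X]mul1r ler_wpM2r // mulr_ge0 ?divr_ge0 //; lra.
  rewrite -mulrA; lra.
Qed.

Lemma acos_sqr_le : exists K : R, 1 <= K /\
  forall t, -1 <= t <= 1 -> acos t ^+ 2 <= K * (1 - t).
Proof.
have [k [/andP[k0 k1] hk]] := sin_ge_linear.
exists (2 / k ^+ 2); split.
  by rewrite ler_pdivlMr ?exprn_gt0 // mul1r; nra.
move=> t tI; set th := acos t.
have [th0 thpi] : 0 <= th /\ th <= pi by split; [exact: acos_ge0 | exact: acos_lepi].
have <- : cos th = t by apply: acosK; rewrite in_itv.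
have -> : cos th = 1 - 2 * sin (th / 2) ^+ 2.
  have -> : cos th = cos ((th / 2) *+ 2) by rewrite -mulr_natr divfK.
  by rewrite cos_mulr2n cos2sin2; lra.
have hs : k * (th / 2) <= sin (th / 2).
  by apply: hk; [exact: divr_ge0 | rewrite ler_pM2r ?invr_gt0].
have hs0 : 0 <= k * (th / 2) by rewrite mulr_ge0 ?divr_ge0 // ltW.
have : (k * (th / 2)) ^+ 2 <= sin (th / 2) ^+ 2.
  by rewrite ler_sqr ?nnegrE // (le_trans hs0 hs).
rewrite mulrAC ler_pdivlMr ?exprn_gt0 // exprMn.
set S := sin (th / 2) ^+ 2; have -> : (th / 2) ^+ 2 = th ^+ 2 / 4 by field.
nra.
Qed.

End Trigonometry.

Section Vectors.
Variable R : realType.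
Implicit Types (x y : 'rV[R]_3) (s t : R).

Lemma dot3E x y : dot3 x y =
  x 0 0 * y 0 0 + x 0 (lift 0 0) * y 0 (lift 0 0)
  + x 0 (lift 0 (lift 0 0)) * y 0 (lift 0 (lift 0 0)).
Proof. by rewrite /dot3 !big_ord_recl big_ord0 addr0 addrA. Qed.

Lemma dot3Z s t x y : dot3 (s *: x) (t *: y) = s * t * dot3 x y.
Proof. by rewrite !dot3E !mxE; ring. Qed.

Lemma dot3_sub x y : dot3 (x - y) (x - y) = dot3 x x + dot3 y y - 2 * dot3 x y.
Proof. by rewrite !dot3E !mxE; ring. Qed.

Lemma dot3_ge0 x : 0 <= dot3 x x.
Proof. by rewrite sumr_ge0 // => i _; rewrite -expr2 sqr_ge0. Qed.

Lemma dot3_gt0 x : x != 0 -> 0 < dot3 x x.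
Proof.
move=> x0; rewrite lt_def dot3_ge0 andbT; apply: contra x0 => /eqP x2.
apply/eqP/rowP => i; rewrite mxE; apply/eqP.
by rewrite -sqrf_eq0 expr2 (psumr_eq0P _ x2) // => j _; rewrite -expr2 sqr_ge0.
Qed.

(* Lagrange's identity in dimension 3 *)
Lemma dot3_cauchy_schwarz x y : dot3 x y ^+ 2 <= dot3 x x * dot3 y y.
Proof.
rewrite !dot3E; set a := x _ _; set b := x _ _; set c := x _ _.
set d := y _ _; set e := y _ _; set f := y _ _.
rewrite -subr_ge0.
have -> : (a * a + b * b + c * c) * (d * d + e * e + f * f) -
   (a * d + b * e + c * f) ^+ 2 =
   (a * e - b * d) ^+ 2 + (a * f - c * d) ^+ 2 + (b * f - c * e) ^+ 2 by ring.
by rewrite !addr_ge0 ?sqr_ge0.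
Qed.

Lemma norm3_ge0 x : 0 <= norm3 x.
Proof. exact: sqrtr_ge0. Qed.

Lemma norm3_sqr x : norm3 x ^+ 2 = dot3 x x.
Proof. by rewrite sqr_sqrtr ?dot3_ge0. Qed.

Lemma norm3_gt0 x : x != 0 -> 0 < norm3 x.
Proof. by move=> x0; rewrite sqrtr_gt0 dot3_gt0. Qed.

Lemma norm3_sgnZ (b : bool) x : norm3 (sgnb b *: x) = norm3 x.
Proof. by rewrite /norm3 dot3Z; case: b; rewrite /sgnb ?mulrNN !mul1r. Qed.

Lemma normr_dot3_le x y : `|dot3 x y| <= norm3 x * norm3 y.
Proof.
rewrite -ler_sqr ?nnegrE ?mulr_ge0 ?norm3_ge0 //.
by rewrite real_normK ?num_real // exprMn !norm3_sqr dot3_cauchy_schwarz.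
Qed.

Lemma jb_ge0 c x : 0 <= jb c x.
Proof. exact: sqrtr_ge0. Qed.

Lemma jb_sqr c x : jb c x ^+ 2 = c ^+ 2 + norm3 x ^+ 2.
Proof. by rewrite norm3_sqr sqr_sqrtr // addr_ge0 ?sqr_ge0 ?dot3_ge0. Qed.

Lemma sgnb_neq0 (s : bool) : sgnb s != 0 :> R.
Proof. by case: s; rewrite /sgnb ?oppr_eq0 oner_neq0. Qed.

Lemma angle3_sqr_le (K : R) :
  (forall t, -1 <= t <= 1 -> acos t ^+ 2 <= K * (1 - t)) ->
  forall x y, x != 0 -> y != 0 -> exists2 w, 0 <= w <= 2 &
    norm3 x * norm3 y * w = norm3 x * norm3 y - dot3 x y /\ angle3 x y ^+ 2 <= K * w.
Proof.
move=> hK x y x0 y0; have xy0 : 0 < norm3 x * norm3 y by rewrite mulr_gt0 ?norm3_gt0.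
set t := dot3 x y / (norm3 x * norm3 y).
have /ler_normlP [tl tr] : `|t| <= 1.
  by rewrite normrM normfV (gtr0_norm xy0) ler_pdivrMr // mul1r normr_dot3_le.
exists (1 - t); first by apply/andP; split; lra.
split; last by rewrite /angle3 -/t; apply: hK; apply/andP; split; lra.
by rewrite mulrBr mulr1 [_ * t]mulrC /t divfK // lt0r_neq0.
Qed.

Lemma angle3_sgn_sqr_le (K : R) :
  (forall t, -1 <= t <= 1 -> acos t ^+ 2 <= K * (1 - t)) ->
  forall (s1 s2 : bool) x y, x != 0 -> y != 0 -> exists2 w, 0 <= w <= 2 &
    norm3 x * norm3 y * w = norm3 x * norm3 y - sgnb s1 * sgnb s2 * dot3 x y /\
    angle3 (sgnb s1 *: x) (sgnb s2 *: y) ^+ 2 <= K * w.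
Proof.
move=> hK s1 s2 x y x0 y0.
have := angle3_sqr_le hK (_ : sgnb s1 *: x != 0) (_ : sgnb s2 *: y != 0).
by rewrite !norm3_sgnZ dot3Z; apply; rewrite scaler_eq0 negb_or sgnb_neq0.
Qed.

End Vectors.

Section Brackets.
Variable R : realType.
Implicit Types c z u v a b A : R.

(* [bracket c z a] encodes [a = <xi>_c] for [z = |xi|]. *)
Definition bracket c z a := 0 <= a /\ a ^+ 2 = c ^+ 2 + z ^+ 2.

Lemma ler_of_sqr (x y : R) : 0 <= y -> x ^+ 2 <= y ^+ 2 -> x <= y.
Proof. by move=> y0 h; nra. Qed.

Lemma bracket_bounds c z a : 0 < c -> 0 <= z -> bracket c z a ->
  [/\ c <= a, z <= a & a <= c + z].
Proof. by move=> c0 z0 [a0 e]; split; apply: ler_of_sqr; nra. Qed.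

Lemma bracket1_bounds z A : 0 <= z -> bracket 1 z A ->
  [/\ 1 <= A, z <= A, A <= 1 + z & 1 + z <= 2 * A].
Proof. by move=> z0 hA; have [] := bracket_bounds ltr01 z0 hA; split => //; lra. Qed.

Lemma bracket_compare c z a A : 0 < c -> 0 <= z -> bracket c z a -> bracket 1 z A ->
  c * A <= (1 + c) * a /\ a <= (1 + c) * A.
Proof.
move=> c0 z0 ha hA; have [ca za ac] := bracket_bounds c0 z0 ha.
have [A1 zA Az _] := bracket1_bounds z0 hA.
split; first nra.
have : c <= c * A by rewrite ler_peMr // ltW.
lra.
Qed.

Lemma bracket_le_add c u v a b : 0 <= u -> 0 <= v ->
  bracket c u a -> bracket c v b -> b <= a + `|v - u|.
Proof.
move=> u0 v0 [a0 ea] [b0 eb]; set e := `|v - u|.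
have e0 : 0 <= e := normr_ge0 _.
have ua : u <= a by apply: ler_of_sqr; nra.
have ve : v <= u + e by rewrite -lerBlDl ler_norm.
apply: ler_of_sqr; first by rewrite addr_ge0.
have : u * e <= a * e by rewrite ler_wpM2r.
have : v ^+ 2 <= (u + e) ^+ 2 by rewrite ler_sqr ?nnegrE ?addr_ge0.
move=> h1 h2; rewrite eb sqrrD ea; lra.
Qed.

Lemma bracket_mul_ge M u v a b : 0 <= u -> 0 <= v ->
  bracket M u a -> bracket M v b -> M ^+ 2 + u * v <= a * b.
Proof.
move=> u0 v0 [a0 ea] [b0 eb]; apply: ler_of_sqr; first exact: mulr_ge0.
by rewrite exprMn ea eb -subr_ge0; have := sqr_ge0 (M * (u - v)); nra.
Qed.

Lemma bracket_gap_far M u v a b : 0 < M -> 0 <= u -> 2 * u + 1 <= v ->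
  bracket M u a -> bracket M v b ->
  M ^+ 2 * (1 + v) <= 12 * (1 + M) ^+ 2 * (1 + u) * (a * b - M ^+ 2 - u * v).
Proof.
move=> M0 u0 far ha hb; have v0 : 0 <= v by lra.
have [_ _ aMu] := bracket_bounds M0 u0 ha.
have [_ _ bMv] := bracket_bounds M0 v0 hb.
have abM := bracket_mul_ge u0 v0 ha hb.
have H0 : 0 <= a * b - M ^+ 2 - u * v by lra.
set H := a * b - M ^+ 2 - u * v in H0 *.
have eH : H * (a * b + M ^+ 2 + u * v) = M ^+ 2 * (u - v) ^+ 2.
  case: ha hb => [_ ea] [_ eb].
  have -> : H * (a * b + M ^+ 2 + u * v) = (a * b) ^+ 2 - (M ^+ 2 + u * v) ^+ 2.
    by rewrite /H; ring.
  by rewrite exprMn ea eb; ring.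
set X := (1 + M) ^+ 2 * ((1 + u) * (1 + v)).
have SX : a * b + M ^+ 2 + u * v <= 3 * X.
  have : a * b <= X.
    have -> : X = ((1 + M) * (1 + u)) * ((1 + M) * (1 + v)) by rewrite /X; ring.
    have : a <= (1 + M) * (1 + u) by have := mulr_ge0 (ltW M0) u0; lra.
    have : b <= (1 + M) * (1 + v) by have := mulr_ge0 (ltW M0) v0; lra.
    by move=> *; apply: ler_pM; [exact: ha.1|exact: hb.1|..].
  have := sqr_ge0 M; have := mulr_ge0 u0 v0; lra.
have : (1 + v) ^+ 2 <= 4 * (u - v) ^+ 2.
  have -> : 4 * (u - v) ^+ 2 = (2 * (v - u)) ^+ 2 by ring.
  by rewrite ler_sqr ?nnegrE; lra.
move/(ler_wpM2l (sqr_ge0 M)); rewrite [M ^+ 2 * (4 * _)]mulrCA -eH => h.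
have : M ^+ 2 * (1 + v) ^+ 2 <= 4 * (H * (3 * X)).
  by apply: le_trans h _; rewrite ler_wpM2l // ler_wpM2l.
have v1 : 0 < 1 + v by lra.
rewrite -(ler_pM2r v1) /X; nra.
Qed.

Lemma bracket_gap_ratio M : 0 < M -> exists Q, 0 < Q /\ forall u v a b,
  0 <= u -> 0 <= v -> bracket M u a -> bracket M v b ->
  1 + v <= Q * (1 + u) * (1 + (a * b - M ^+ 2 - u * v)).
Proof.
move=> M0; have M2 : 0 < M ^+ 2 by rewrite exprn_gt0.
set Q' := 12 * (1 + M) ^+ 2 / M ^+ 2.
have Q'0 : 0 < Q' by rewrite divr_gt0 // mulr_gt0 // exprn_gt0 //; lra.
exists (2 + Q'); split => [|u v a b u0 v0 ha hb]; first lra.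
have H0 : 0 <= a * b - M ^+ 2 - u * v by have := bracket_mul_ge u0 v0 ha hb; lra.
set H := a * b - M ^+ 2 - u * v in H0 *.
have uH : 0 <= (1 + u) * H by apply: mulr_ge0; lra.
have : 0 <= Q' * ((1 + u) * H) by apply: mulr_ge0; lra.
have [near|far] := lerP v (2 * u + 1); first nra.
have : 1 + v <= Q' * (1 + u) * H.
  have -> : Q' * (1 + u) * H = 12 * (1 + M) ^+ 2 * (1 + u) * H / M ^+ 2.
    by rewrite /Q'; field; rewrite lt0r_neq0.
  by rewrite ler_pdivlMr // mulrC; apply: bracket_gap_far (ltW far) ha hb.
nra.
Qed.

End Brackets.

Section LowerBounds.
Variable R : realType.

(* The conclusions of the theorem for [Y = |mu|], [q = s1 s2 xi1.xi2] and the brackets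
   [A], [B], [D] of [xi1], [xi2], [xi1 - xi2]; [w] stands for the [1 - cos] of the angle,
   which satisfies [u v w = u v - q]. *)
Definition mu_bounds (K u v q A B D Y : R) (case1 case2 : Prop) : Prop :=
  [/\ case1 -> Num.max D (Num.max A B) <= K * Y,
      case2 -> forall w, 0 <= w <= 2 -> u * v * w = u * v - q -> A * B * w <= K * Y * D,
      1 <= K * Y * A, 1 <= K * Y * B & 1 <= K * Y * D].

Lemma mu_bounds_ge (K K' u v q A B D Y : R) (case1 case2 : Prop) :
  K <= K' -> 0 <= Y -> 0 <= A -> 0 <= B -> 0 <= D ->
  mu_bounds K u v q A B D Y case1 case2 -> mu_bounds K' u v q A B D Y case1 case2.
Proof.
move=> KK Y0 A0 B0 D0 [h1 h2 hA hB hD].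
have KY : K * Y <= K' * Y by rewrite ler_wpM2r.
have KYX X : 0 <= X -> K * Y * X <= K' * Y * X by move=> X0; rewrite ler_wpM2r.
split; [by move=> /h1 /le_trans; apply | | exact: le_trans (KYX _ A0)
  | exact: le_trans (KYX _ B0) | exact: le_trans (KYX _ D0)].
by move=> c w w2 ew; apply: le_trans (h2 c w w2 ew) (KYX _ D0).
Qed.

Lemma mu_bounds_split (K u v q A B D Y : R) (case1 case2 : Prop) :
  (case1 -> mu_bounds K u v q A B D Y True False) ->
  (case2 -> mu_bounds K u v q A B D Y False True) ->
  case1 \/ case2 -> mu_bounds K u v q A B D Y case1 case2.
Proof.
move=> h1 h2 c12; split.
- by move=> /h1 [+ _ _ _ _]; apply.
- by move=> /h2 [_ + _ _ _]; apply.
all: by case: c12 => [/h1|/h2] [].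
Qed.

Lemma mu_bounds_weaken (K u v q A B D Y : R) (case1 case2 case1' case2' : Prop) :
  (case1' -> case1) -> (case2' -> case2) ->
  mu_bounds K u v q A B D Y case1 case2 -> mu_bounds K u v q A B D Y case1' case2'.
Proof. by move=> h1 h2 [b1 b2 bA bB bD]; split => // [/h1|/h2]. Qed.

Lemma ler_invMl_of (C c X Y : R) : 0 < C -> 0 <= Y -> c <= C -> X <= c * Y -> C^-1 * X <= Y.
Proof.
move=> C0 Y0 cC XY; rewrite mulrC ler_pdivrMr // mulrC.
by apply: le_trans XY _; rewrite ler_wpM2r.
Qed.

Lemma gap_ratio_bounds (K0 d u v A B D Z : R) : 0 < d -> d <= Z -> 0 <= K0 ->
  0 <= u -> 0 <= v -> bracket 1 u A -> bracket 1 v B -> D <= 1 + u + v ->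
  1 + v <= K0 * (1 + u) * Z ->
  D <= 2 * (1 / d + K0) * A * Z /\
  (u < 1 -> forall w, 0 <= w <= 2 -> A * B * w <= 8 * K0 * Z).
Proof.
move=> d0 dZ K00 u0 v0 hA hB Duv ratio.
have [A1 _ Au uA] := bracket1_bounds u0 hA.
have [B1 _ Bv _] := bracket1_bounds v0 hB.
have Z1 : 1 <= Z / d by rewrite ler_pdivlMr // mul1r.
have Z0 : 0 <= Z by lra.
split.
  set E := 1 / d + K0.
  have E0 : 0 <= E * Z by rewrite mulr_ge0 // addr_ge0 // divr_ge0 //; lra.
  have : 1 + u <= (1 + u) * (Z / d) by rewrite ler_peMr //; lra.
  have -> : 2 * E * A * Z = (2 * A) * (E * Z) by ring.
  have : (1 + u) * (E * Z) <= (2 * A) * (E * Z) by rewrite ler_wpM2r.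
  have -> : (1 + u) * (E * Z) = (1 + u) * (Z / d) + K0 * (1 + u) * Z by rewrite /E; ring.
  lra.
move=> u1 w /andP[w0 w2].
have : A * B * w <= 2 * (1 + v) * 2.
  by apply: ler_pM; [rewrite mulr_ge0 //; lra|done|apply: ler_pM; lra|done].
have : K0 * (1 + u) * Z <= K0 * 2 * Z by rewrite ler_wpM2r // ler_wpM2l //; lra.
lra.
Qed.

Lemma mu_bounds_case2 (M d L : R) : 0 < M -> 0 < d -> 0 < L ->
  exists K, 0 < K /\ forall u v q a b A B D Y Z,
  0 <= u -> 0 <= v -> bracket M u a -> bracket M v b ->
  bracket 1 u A -> bracket 1 v B -> 1 <= D -> D <= 1 + u + v -> 0 <= Y ->
  d <= Z -> 2 * (a * b - M ^+ 2 - u * v) <= Z -> 2 * (u * v - q) <= Z ->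
  Z <= L * Y * D -> mu_bounds K u v q A B D Y False True.
Proof.
move=> M0 d0 L0; have [Q [Q0 ratio]] := bracket_gap_ratio M0.
set K0 := Q * (1 / d + 1).
have K00 : 0 <= K0 by rewrite mulr_ge0 ?addr_ge0 ?divr_ge0 //; lra.
have d1 : 0 <= 1 / d by rewrite divr_ge0 // ltW.
set k := 2 / d + 8 * K0 + 2.
have [k8 k2 kA kd] : [/\ 8 * K0 <= k, 2 <= k, 2 * (1 / d + K0) <= k & 1 / d <= k].
  by rewrite /k; split; lra.
exists (L * k); split => [|u v q a b A B D Y Z u0 v0 ha hb hA hB D1 Duv Y0 dZ HZ qZ ZY].
  by rewrite mulr_gt0 //; lra.
have Z1 : 1 <= Z / d by rewrite ler_pdivlMr // mul1r.
have grow x y ax ay : 0 <= x -> 0 <= y -> bracket M x ax -> bracket M y ay ->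
    2 * (ax * ay - M ^+ 2 - x * y) <= Z -> 1 + y <= K0 * (1 + x) * Z.
  move=> hx0 hy0 hx hy hZ; apply: le_trans (ratio _ _ _ _ hx0 hy0 hx hy) _.
  have -> : K0 * (1 + x) * Z = Q * (1 + x) * ((1 / d + 1) * Z) by rewrite /K0; ring.
  apply: ler_wpM2l; first by rewrite mulr_ge0 //; lra.
  have := bracket_mul_ge hx0 hy0 hx hy; rewrite mulrDl mul1r mulrC; lra.
have HZ' : 2 * (b * a - M ^+ 2 - v * u) <= Z by rewrite [b * a]mulrC [v * u]mulrC.
have [DA ABw] := gap_ratio_bounds d0 dZ K00 u0 v0 hA hB Duv (grow _ _ _ _ u0 v0 ha hb HZ).
have Duv' : D <= 1 + v + u by rewrite addrAC.
have [DB BAw] := gap_ratio_bounds d0 dZ K00 v0 u0 hB hA Duv' (grow _ _ _ _ v0 u0 hb ha HZ').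
have YD : 0 <= Y * D by rewrite mulr_ge0 //; lra.
have ZK c : 0 <= c -> c <= k -> c * Z <= L * k * Y * D.
  move=> c0 ck; apply: le_trans (ler_wpM2l c0 ZY) _.
  by rewrite -!mulrA mulrCA ler_wpM2l ?(ltW L0) // ler_wpM2r.
have invD X c : 0 < X -> D <= c * X * Z -> 0 <= c -> c <= k -> 1 <= L * k * Y * X.
  move=> X0 DX c0 ck.
  have : D * 1 <= D * (c * L * Y * X).
    rewrite mulr1; apply: le_trans DX _.
    have -> : D * (c * L * Y * X) = c * X * (L * Y * D) by ring.
    by rewrite ler_wpM2l // mulr_ge0 // ltW.
  rewrite ler_pM2l; last lra.
  move/le_trans; apply; rewrite -!mulrA mulrCA ler_wpM2l ?(ltW L0) //.
  by rewrite ler_wpM2r // mulr_ge0 // ltW.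
split => //.
- move=> _ w w2 ew.
  have K08 : 0 <= 8 * K0 by lra.
  have [u1|u1] := ltP u 1; first exact: le_trans (ABw u1 w w2) (ZK _ K08 k8).
  have [v1|v1] := ltP v 1; first by rewrite [A * B]mulrC; exact: le_trans (BAw v1 w w2) (ZK _ K08 k8).
  have [A1 _ Au _] := bracket1_bounds u0 hA; have [B1 _ Bv _] := bracket1_bounds v0 hB.
  case/andP: w2 => w0 w2.
  have : A * B * w <= (1 + u) * (1 + v) * w by rewrite ler_wpM2r // ler_pM //; lra.
  have : (1 + u) * (1 + v) * w <= 4 * (u * v * w).
    by rewrite mulrA ler_wpM2r //; nra.
  have := ZK 2 (ler0n _ 2) k2; lra.
- have [A1 _ _ _] := bracket1_bounds u0 hA.
  by apply: (invD _ (2 * (1 / d + K0))) => //; lra.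
- have [B1 _ _ _] := bracket1_bounds v0 hB.
  by apply: (invD _ (2 * (1 / d + K0))) => //; lra.
- apply: (invD _ (1 / d)) => //; first lra.
  have -> : 1 / d * D * Z = D * (Z / d) by ring.
  by rewrite -[X in X <= _]mulr1 ler_wpM2l //; lra.
Qed.

Lemma mu_bounds_case1 (m M : R) : 0 < m -> 0 < M ->
  exists K, 0 < K /\ forall u v r q a b d A B D Y,
  0 <= u -> 0 <= v -> 0 <= r -> bracket M u a -> bracket M v b -> bracket m r d ->
  bracket 1 u A -> bracket 1 v B -> bracket 1 r D ->
  d <= Y -> a <= 2 * Y -> b <= 2 * Y -> mu_bounds K u v q A B D Y True False.
Proof.
move=> m0 M0; set K := 2 * (1 + m) / m + 2 * (1 + M) / M.
have Km : 2 * (1 + m) / m <= K by rewrite /K lerDl divr_ge0 //; lra.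
have KM : 2 * (1 + M) / M <= K by rewrite /K lerDr divr_ge0 //; lra.
exists K; split => [|u v r q a b d A B D Y u0 v0 r0 ha hb hd hA hB hD dY aY bY].
  by apply: lt_le_trans KM; rewrite divr_gt0 //; lra.
have le_KY c z x X : 0 < c -> 0 <= z -> bracket c z x -> bracket 1 z X ->
    2 * (1 + c) / c <= K -> x <= 2 * Y -> X <= K * Y.
  move=> c0 z0 hx hX cK xY; have [cX _] := bracket_compare c0 z0 hx hX.
  apply: le_trans (ler_wpM2r _ cK); last by have [cx _ _] := bracket_bounds c0 z0 hx; lra.
  have : (1 + c) * x <= (1 + c) * (2 * Y) by rewrite ler_wpM2l //; lra.
  rewrite mulrAC ler_pdivlMr // mulrC; lra.
have DY : D <= K * Y by apply: (le_KY m r d) => //; have := hd.1; lra.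
have AY : A <= K * Y by exact: (le_KY M u a).
have BY : B <= K * Y by exact: (le_KY M v b).
have [A1 _ _ _] := bracket1_bounds u0 hA; have [B1 _ _ _] := bracket1_bounds v0 hB.
have [D1 _ _ _] := bracket1_bounds r0 hD.
have KY1 X : 1 <= X -> 1 <= K * Y * X.
  by move=> X1; rewrite -[1]mulr1 ler_pM //; lra.
by split => [_|[]|||]; rewrite ?ge_max ?DY ?AY ?BY ?KY1.
Qed.

End LowerBounds.

Section Configurations.
Variable R : realType.

(* The scalar data of a pair [(xi1, xi2)]: [u, v, r] are the norms of [xi1, xi2, xi1 - xi2],
   [p] is their dot product, [a, b] the [M]-brackets of [xi1, xi2], [d] the [m]-bracket of
   [xi1 - xi2] and [A, B, D] the [1]-brackets of [xi1, xi2, xi1 - xi2]. *)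
Record config (m M u v r p a b d A B D : R) : Prop := Config {
  config_u : 0 <= u; config_v : 0 <= v; config_r : 0 <= r;
  config_p : `|p| <= u * v; config_r2 : r ^+ 2 = u ^+ 2 + v ^+ 2 - 2 * p;
  config_a : bracket M u a; config_b : bracket M v b; config_d : bracket m r d;
  config_A : bracket 1 u A; config_B : bracket 1 v B; config_D : bracket 1 r D }.

Lemma config_r_bounds m M u v r p a b d A B D :
  config m M u v r p a b d A B D -> `|v - u| <= r /\ r <= u + v.
Proof.
case=> u0 v0 r0 /[dup] /ler_normlP [pl pr] pa r2 _ _ _ _ _ _.
split; apply: ler_of_sqr; rewrite ?addr_ge0 //.
  by rewrite real_normK ?num_real // r2; nra.
by rewrite r2; nra.
Qed.

Lemma config_D_le_sum m M u v r p a b d A B D :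
  config m M u v r p a b d A B D -> D <= 1 + u + v.
Proof.
move=> G; have [_ ruv] := config_r_bounds G.
by have [_ _ Dr _] := bracket1_bounds (config_r G) (config_D G); lra.
Qed.

Lemma config_D_le_AB (m M u v r p a b d A B D : R) :
  config m M u v r p a b d A B D -> D <= A + B.
Proof.
move=> G; have [_ ruv] := config_r_bounds G.
case: G => u0 v0 r0 _ _ _ _ _ hA hB [D0 eD].
have [_ uA _ _] := bracket1_bounds u0 hA; have [_ vB _ _] := bracket1_bounds v0 hB.
have uvAB : u * v <= A * B by apply: ler_pM.
have r2 : r ^+ 2 <= (u + v) ^+ 2 by rewrite ler_sqr ?nnegrE ?addr_ge0.
apply: ler_of_sqr; first by rewrite addr_ge0 ?hA.1 ?hB.1.
by rewrite eD sqrrD hA.2 hB.2; lra.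
Qed.

Lemma same_sign_mu_bounds (m M : R) : 0 < m -> 0 < M ->
  exists K, 0 < K /\ forall u v r p a b d A B D mu,
  config m M u v r p a b d A B D -> (mu = d + a - b \/ mu = d - a + b) ->
  mu_bounds K u v p A B D `|mu| False True.
Proof.
move=> m0 M0; have m2 : 0 < m ^+ 2 by rewrite exprn_gt0.
have L0 : 0 < 2 * (1 + m) by lra.
have [K [K0 hK]] := mu_bounds_case2 M0 m2 L0.
exists K; split => // u v r p a b d A B D mu G emu.
case: (G) => u0 v0 r0 /ler_normlP [pl pr] r2 ha hb hd hA hB hD.
have H0 := bracket_mul_ge u0 v0 ha hb.
set N := m ^+ 2 + 2 * (u * v - p) + 2 * (a * b - M ^+ 2 - u * v).
have N0 : m ^+ 2 <= N by rewrite /N; lra.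
have eN : N = d ^+ 2 - (a - b) ^+ 2.
  by case: ha hb hd => [_ ea] [_ eb] [_ ed]; rewrite sqrrB ea eb ed r2 /N; ring.
have /ler_normlP [abl abr] : `|a - b| <= d.
  by apply: ler_of_sqr; [exact: hd.1 | rewrite real_normK ?num_real //; nra].
have [_ dD] := bracket_compare m0 r0 hd hD.
have [D1 _ _ _] := bracket1_bounds r0 hD.
apply: hK u0 v0 ha hb hA hB D1 (config_D_le_sum G) (normr_ge0 mu) N0 _ _ _.
- by rewrite /N; have := sqr_ge0 m; lra.
- by rewrite /N; have := sqr_ge0 m; lra.
(* [mu] times the conjugate phase [2 d - mu], which lies in [[0, 2 d]] *)
have -> : N = mu * (2 * d - mu) by rewrite eN; case: emu => ->; ring.
have [c0 c2] : 0 <= 2 * d - mu /\ 2 * d - mu <= 2 * d by case: emu => ->; lra.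
apply: le_trans (ler_wpM2r c0 (ler_norm mu)) _.
apply: le_trans (ler_wpM2l (normr_ge0 mu) c2) _.
have -> : 2 * (1 + m) * `|mu| * D = `|mu| * (2 * ((1 + m) * D)) by ring.
by rewrite ler_wpM2l //; lra.
Qed.

Lemma opposite_sign_mu_bounds (m M : R) : 0 < m -> 0 < M ->
  exists K, 0 < K /\ forall u v r p a b d A B D,
  config m M u v r p a b d A B D -> mu_bounds K u v (- p) A B D `|d + a + b| True False.
Proof.
move=> m0 M0; have [K [K0 hK]] := mu_bounds_case1 m0 M0.
exists K; split => // u v r p a b d A B D [u0 v0 r0 _ _ ha hb hd hA hB hD].
have := (ha.1, hb.1, hd.1) => -[[a0 b0] d0].
by apply: (hK _ _ _ _ _ _ _ _ _ _ _ u0 v0 r0 ha hb hd hA hB hD);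
  rewrite ger0_norm ?addr_ge0 //; lra.
Qed.

Lemma mixed_sign_mu_bounds (m M : R) : 0 < m -> m < 2 * M ->
  exists K, 0 < K /\ forall u v r p a b d A B D,
  config m M u v r p a b d A B D ->
  mu_bounds K u v (- p) A B D `|d - a - b|
    (d <= 1 / 2 * Num.min a b) (1 / 2 * Num.min a b < d).
Proof.
move=> m0 mM; have M0 : 0 < M by lra.
have [K1 [K10 hK1]] := mu_bounds_case1 m0 M0.
have dl0 : 0 < 4 * M ^+ 2 - m ^+ 2.
  have -> : 4 * M ^+ 2 - m ^+ 2 = (2 * M - m) * (2 * M + m) by ring.
  by rewrite mulr_gt0 //; lra.
have L0 : 0 < 6 * (1 + m) by lra.
have [K2 [K20 hK2]] := mu_bounds_case2 M0 dl0 L0.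
exists (K1 + K2); split => [|u v r p a b d A B D G]; first lra.
case: (G) => u0 v0 r0 /ler_normlP [pl pr] r2 ha hb hd hA hB hD.
have := (ha.1, hb.1, hd.1) => -[[a0 b0] d0].
have H0 := bracket_mul_ge u0 v0 ha hb.
set P := 4 * M ^+ 2 - m ^+ 2 + 2 * (u * v + p) + 2 * (a * b - M ^+ 2 - u * v).
have eP : P = (a + b - d) * (a + b + d).
  by case: ha hb hd => [_ ea] [_ eb] [_ ed]; rewrite /P -subr_sqr sqrrD ea eb ed r2; ring.
have dP : 4 * M ^+ 2 - m ^+ 2 <= P by rewrite /P; lra.
have dab : d <= a + b by apply: ler_of_sqr; [lra | move: dP; rewrite eP; nra].
have -> : `|d - a - b| = a + b - d.
  by rewrite (_ : d - a - b = - (a + b - d)) ?normrN ?ger0_norm //; [lra | ring].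
have [A0 B0 D0] : [/\ 0 <= A, 0 <= B & 0 <= D] by split; [exact: hA.1|exact: hB.1|exact: hD.1].
have Y0 : 0 <= a + b - d by lra.
have [ma mb] : Num.min a b <= a /\ Num.min a b <= b.
  by split; rewrite ge_min lexx ?orbT.
apply: mu_bounds_split; last by case: (lerP d (1 / 2 * Num.min a b)); [left|right].
- move=> dmin; apply: mu_bounds_ge (hK1 _ _ _ _ _ _ _ _ _ _ _ u0 v0 r0 ha hb hd hA hB hD _ _ _) => //; lra.
- move=> dmin; apply: mu_bounds_ge (hK2 _ _ _ _ _ _ _ _ _ _ u0 v0 ha hb hA hB _ (config_D_le_sum G) Y0 dP _ _ _) => //; try lra.
  + by have [] := bracket1_bounds r0 hD.
  + by rewrite /P; lra.
  + by rewrite /P; lra.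
  (* [P = |mu| (a + b + d)] and [a + b + d <= 6 d] since [max a b <= min a b + r] *)
  have [vur _] := config_r_bounds G; have [_ rd _] := bracket_bounds m0 r0 hd.
  have bar := bracket_le_add u0 v0 ha hb; have abr := bracket_le_add v0 u0 hb ha.
  rewrite distrC in abr.
  have : a < 2 * d \/ b < 2 * d.
    by case: (leP a b) => ab; [left; rewrite min_l in dmin | right; rewrite min_r in dmin]; lra.
  have [_ dD] := bracket_compare m0 r0 hd hD.
  move=> two_d; have : a + b + d <= 6 * (1 + m) * D by case: two_d; lra.
  rewrite eP (_ : 6 * (1 + m) * (a + b - d) * D = (a + b - d) * (6 * (1 + m) * D)); last by ring.
  exact: ler_wpM2l.
Qed.

Lemma mu_bounds_conclude (m M K Kt u v r p a b d A B D q Y th : R) (case1 case2 : Prop) :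
  0 < K -> 1 <= Kt -> config m M u v r p a b d A B D -> 0 <= Y -> 0 <= th ->
  mu_bounds K u v q A B D Y case1 case2 -> case1 \/ case2 ->
  let W := exists2 w, 0 <= w <= 2 & u * v * w = u * v - q /\ th <= Kt * w in
  [/\ case1 -> (2 * Kt * K)^-1 * Num.max D (Num.max A B) <= Y,
      case2 -> W -> (2 * Kt * K)^-1 * (A * B / D) * th <= Y,
      W -> (2 * Kt * K)^-1 * Num.min A B * th <= Y &
      (2 * Kt * K)^-1 * Num.max D^-1 (Num.max A^-1 B^-1) <= Y].
Proof.
move=> K0 Kt1 G Y0 th0 [b1 b2 bA bB bD] c12 W.
have [A1 _ _ _] := bracket1_bounds (config_u G) (config_A G).
have [B1 _ _ _] := bracket1_bounds (config_v G) (config_B G).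
have [D1 _ _ _] := bracket1_bounds (config_r G) (config_D G).
have DAB := config_D_le_AB G.
have KY0 : 0 <= K * Y by rewrite mulr_ge0 // ltW.
have C0 : 0 < 2 * Kt * K by rewrite !mulr_gt0 //; lra.
have KC : K <= 2 * Kt * K by rewrite ler_peMl ?(ltW K0) //; lra.
have KtC : Kt * K <= 2 * Kt * K by rewrite -mulrA ler_peMl ?mulr_ge0 //; lra.
have angle2 : case2 -> W -> A * B / D * th <= Kt * K * Y.
  move=> c2 [w w2 [ew thw]].
  have ABD0 : 0 <= A * B / D by rewrite divr_ge0 ?mulr_ge0 //; lra.
  apply: le_trans (ler_wpM2l ABD0 thw) _.
  have -> : A * B / D * (Kt * w) = Kt * (A * B * w / D) by ring.
  rewrite -[Kt * K * Y]mulrA ler_wpM2l ?(le_trans ler01 Kt1) //.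
  by rewrite ler_pdivrMr; [exact: b2 | lra].
split.
- by move=> /b1; apply: ler_invMl_of C0 Y0 KC.
- by move=> c2 hW; rewrite -mulrA; exact: ler_invMl_of C0 Y0 KtC (angle2 c2 hW).
- move=> hW; rewrite -mulrA; apply: ler_invMl_of C0 Y0 (lexx _) _.
  have mA : Num.min A B <= A by rewrite ge_min lexx.
  have mB : Num.min A B <= B by rewrite ge_min lexx orbT.
  have m0' : 0 <= Num.min A B by rewrite le_min; apply/andP; split; lra.
  case: c12 => [/b1|c2].
  + rewrite !ge_max => /and3P [_ AY _]; case: hW => w /andP [_ w2] [_ thw].
    have : th <= Kt * 2 by apply: le_trans thw _; rewrite ler_wpM2l //; lra.
    move=> /(ler_pM m0' th0 (le_trans mA AY)).
    by rewrite (_ : K * Y * (Kt * 2) = 2 * Kt * K * Y) //; ring.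
  + have : Num.min A B <= 2 * (A * B / D).
      rewrite mulrA ler_pdivlMr; last lra.
      by case: (leP A B) => AB; nra.
    move=> /(ler_wpM2r th0) /le_trans; apply.
    rewrite (_ : 2 * Kt * K * Y = 2 * (Kt * K * Y)); last by ring.
    by rewrite -[2 * _ * th]mulrA ler_wpM2l //; exact: angle2.
- apply: ler_invMl_of C0 Y0 KC _; rewrite !ge_max; apply/and3P.
  by split; rewrite -div1r ler_pdivrMr //; lra.
Qed.

End Configurations.

Section VectorConfigurations.
Variable R : realType.
Implicit Types (x y : 'rV[R]_3).

Lemma bracket_jb (c : R) x : bracket c (norm3 x) (jb c x).
Proof. by split; [exact: jb_ge0 | exact: jb_sqr]. Qed.

Lemma config_vec (m M : R) x y :
  config m M (norm3 x) (norm3 y) (norm3 (x - y)) (dot3 x y)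
    (jb M x) (jb M y) (jb m (x - y)) (jb1 x) (jb1 y) (jb1 (x - y)).
Proof.
split; try exact: bracket_jb; rewrite ?norm3_ge0 ?normr_dot3_le //.
by rewrite !norm3_sqr dot3_sub.
Qed.

Lemma mu_bounds_vec (m M : R) : 0 < m -> m < 2 * M -> exists K, 0 < K /\
  forall (s1 s2 : bool) (x1 x2 : 'rV[R]_3),
  mu_bounds K (norm3 x1) (norm3 x2) (sgnb s1 * sgnb s2 * dot3 x1 x2)
    (jb1 x1) (jb1 x2) (jb1 (x1 - x2)) `|mu m M s1 s2 x1 x2|
    (s1 && ~~ s2 \/ ~~ s1 /\ s2 /\ jb m (x1 - x2) <= 1 / 2 * Num.min (jb M x1) (jb M x2))
    (s1 = s2 \/ ~~ s1 /\ s2 /\ 1 / 2 * Num.min (jb M x1) (jb M x2) < jb m (x1 - x2)).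
Proof.
move=> m0 mM; have M0 : 0 < M by lra.
have [K1 [K10 h1]] := same_sign_mu_bounds m0 M0.
have [K2 [K20 h2]] := opposite_sign_mu_bounds m0 M0.
have [K3 [K30 h3]] := mixed_sign_mu_bounds m0 mM.
exists (K1 + K2 + K3); split => [|s1 s2 x1 x2]; first lra.
have G := config_vec m M x1 x2.
apply: (@mu_bounds_ge _ (if s1 == s2 then K1 else if s1 then K2 else K3));
  rewrite ?normr_ge0 ?jb_ge0 //; first by case: s1 s2 => [] [] /=; lra.
case: s1 s2 => [] [] /=; rewrite /mu /sgnb ?(mul1r, mulN1r, mulr1, opprK).
- by apply: mu_bounds_weaken (h1 _ _ _ _ _ _ _ _ _ _ _ G (or_introl erefl)) => // -[|[]].
- by apply: mu_bounds_weaken (h2 _ _ _ _ _ _ _ _ _ _ G) => // -[|[]].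
- by apply: mu_bounds_weaken (h3 _ _ _ _ _ _ _ _ _ _ G); case=> // -[_ [_]]; rewrite mul1r.
- by apply: mu_bounds_weaken (h1 _ _ _ _ _ _ _ _ _ _ _ G (or_intror erefl)) => // -[|[_ []]].
Qed.

Lemma sign_cases_cover (s1 s2 : bool) (c X Y : R) :
  (s1 && ~~ s2 \/ ~~ s1 /\ s2 /\ X <= c * Y) \/ (s1 = s2 \/ ~~ s1 /\ s2 /\ c * Y < X).
Proof. by case: s1 s2 => [] []; [right; left|left; left|case: (lerP X (c * Y)); auto|auto]. Qed.

End VectorConfigurations.

Theorem lemma2p2 :
  forall (R : realType), exists c : R, 0 < c /\
  forall (m M : R), 0 < m -> m < 2 * M ->
  exists C : R, 0 < C /\
  forall (s1 s2 : bool) (x1 x2 : 'rV[R]_3),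
    (* Case 1 *)
    ((s1 && ~~ s2) \/
     (~~ s1 /\ s2 /\ jb m (x1 - x2) <= c * Num.min (jb M x1) (jb M x2)) ->
     C^-1 * Num.max (jb1 (x1 - x2)) (Num.max (jb1 x1) (jb1 x2))
       <= `|mu m M s1 s2 x1 x2|) /\
    (* Case 2 *)
    ((s1 = s2 \/
     (~~ s1 /\ s2 /\ c * Num.min (jb M x1) (jb M x2) < jb m (x1 - x2))) ->
     x1 != 0 -> x2 != 0 ->
     C^-1 * (jb1 x1 * jb1 x2 / jb1 (x1 - x2))
       * angle3 (sgnb s1 *: x1) (sgnb s2 *: x2) ^+ 2
       <= `|mu m M s1 s2 x1 x2|) /\
    (* all signs *)
    (x1 != 0 -> x2 != 0 ->
     C^-1 * Num.min (jb1 x1) (jb1 x2)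
       * angle3 (sgnb s1 *: x1) (sgnb s2 *: x2) ^+ 2
       <= `|mu m M s1 s2 x1 x2|) /\
    C^-1 * Num.max (jb1 (x1 - x2))^-1 (Num.max (jb1 x1)^-1 (jb1 x2)^-1)
       <= `|mu m M s1 s2 x1 x2|.
Proof.
move=> R; exists (1 / 2); split => [|m M m0 mM]; first by rewrite divr_gt0.
have [K [K0 hK]] := mu_bounds_vec m0 mM.
have [Kt [Kt1 hKt]] := acos_sqr_le R.
exists (2 * Kt * K); split => [|s1 s2 x1 x2]; first by rewrite !mulr_gt0 //; lra.
set th := angle3 (sgnb s1 *: x1) (sgnb s2 *: x2) ^+ 2.
have [h1 h2 h3 h4] := mu_bounds_conclude K0 Kt1 (config_vec m M x1 x2)
  (normr_ge0 _) (sqr_ge0 _ : 0 <= th) (hK s1 s2 x1 x2) (sign_cases_cover _ _ _ _ _).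
have W := angle3_sgn_sqr_le hKt s1 s2.
split => [//|]; split => [c n1 n2|]; first exact: h2 c (W _ _ n1 n2).
by split => [n1 n2|//]; exact: h3 (W _ _ n1 n2).
Qed.
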